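(* Let $d\ge2$ and $p\in[0,1]$. With systems $A'_1,A'_2,A_1,A_2,\tilde A,B$ (each $\mathbb{C}^d$), an arbitrary state $\rho_{\tilde AB}$, a POVM $\{M^{(i)}\}_{i=1}^K$ on $A_1A_2\tilde A$, unitaries $U^{(i,j)}_B$ ($j=1,2$), $\Omega=\psi^+_{A'_1A_1}\otimes\psi^+_{A'_2A_2}\otimes\rho_{\tilde AB}$, and $$F_j=\sum_{i=1}^{K}\operatorname{tr}\Big[\psi^+_{A'_jB}\,U^{(i,j)}_B\,\operatorname{tr}_{A_1A_2\tilde AA'_{\bar j}}\big[(M^{(i)}\otimes\mathbf 1)\,\Omega\big]\,U^{(i,j)\dagger}_B\Big]\quad(\bar j\ne j),$$ one has $$pF_1+(1-p)F_2\le\frac12\left(1+\sqrt{1+\frac{4(d^2-1)(p-1)p}{d^2}}\right).$$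
   Context: $\psi^+_{XY}$ denotes the maximally entangled state $|\psi^+\rangle\langle\psi^+|$ with $|\psi^+\rangle=\frac1{\sqrt d}\sum_{i=0}^{d-1}|ii\rangle$. This is the asymmetric constrained-entanglement random access code with two $d$-dimensional inputs, where Bob is asked for input 1 with probability $p$ and input 2 with probability $1-p$; $pF_1+(1-p)F_2$ is the success probability. *)

From HB Require Import structures.
From mathcomp Require Import all_boot all_order all_algebra.
From mathcomp Require Import complex.
From mathcomp Require Import reals.
Set Implicit Arguments. Unset Strict Implicit. Unset Printing Implicit Defensive.
Import Order.TTheory GRing.Theory Num.Theory.
Local Open Scope ring_scope.

Section QDefs.
Variable R : realType.
Local Notation C := (R[i]).

(* Operators on a finite-dimensional Hilbert space with orthonormal basis T. *)
Definition Op (T : finType) := T -> T -> C.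

Definition opmul (T : finType) (A B : Op T) : Op T :=
  fun x y => \sum_z A x z * B z y.
Definition opadj (T : finType) (A : Op T) : Op T :=
  fun x y => Num.conj (A y x).
Definition opid (T : finType) : Op T := fun x y => (x == y)%:R.
Definition optr (T : finType) (A : Op T) : C := \sum_x A x x.
Definition kron (T1 T2 : finType) (A : Op T1) (B : Op T2) : Op (T1 * T2)%type :=
  fun x y => A x.1 y.1 * B x.2 y.2.
Definition ptr1 (T1 T2 : finType) (A : Op (T1 * T2)%type) : Op T2 :=
  fun x y => \sum_z A (z, x) (z, y).

Definition psd (T : finType) (A : Op T) : Prop :=
  forall v : T -> C, 0 <= \sum_x \sum_y Num.conj (v x) * A x y * v y.
Definition is_state (T : finType) (rho : Op T) : Prop :=
  psd rho /\ optr rho = 1.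
Definition is_povm (T : finType) (K : nat) (M : 'I_K -> Op T) : Prop :=
  (forall i, psd (M i)) /\ (forall x y, \sum_i M i x y = opid x y).
Definition unitary (T : finType) (U : Op T) : Prop :=
  opmul (opadj U) U = opid (T:=T) /\ opmul U (opadj U) = opid (T:=T).

Definition psiplus (d : nat) : Op ('I_d * 'I_d)%type :=
  fun x y => ((x.1 == x.2) && (y.1 == y.2))%:R / d%:R.

(* Total system ordered as ((A_1, A_2, A~), (A'_1, A'_2, B)). *)
Definition Omega (d : nat) (rho : Op ('I_d * 'I_d)%type) :
  Op (('I_d * 'I_d * 'I_d) * ('I_d * 'I_d * 'I_d))%type :=
  fun x y =>
    let '((a1, a2, ta), (a1', a2', b)) := x in
    let '((c1, c2, ct), (c1', c2', e)) := y in
    psiplus (a1', a1) (c1', c1) * psiplus (a2', a2) (c2', c2)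
    * rho (ta, b) (ct, e).

(* tr_{A1 A2 A~}[(M (x) 1) Omega], an operator on (A'_1, A'_2, B) *)
Definition postM (d K : nat) (M : 'I_K -> Op ('I_d * 'I_d * 'I_d)%type)
  (rho : Op ('I_d * 'I_d)%type) (i : 'I_K) : Op ('I_d * 'I_d * 'I_d)%type :=
  ptr1 (opmul (kron (M i) (opid (T := ('I_d * 'I_d * 'I_d)%type))) (Omega rho)).

(* Reduced operator on (A'_j, B): trace out A'_{jbar}.  j = 0 means
   input 1 (trace out A'_2), j = 1 means input 2 (trace out A'_1). *)
Definition reduce (d : nat) (j : 'I_2) (X : Op ('I_d * 'I_d * 'I_d)%type) :
  Op ('I_d * 'I_d)%type :=
  fun x y =>
    if j == ord0 then \sum_c X (x.1, c, x.2) (y.1, c, y.2)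
    else \sum_c X (c, x.1, x.2) (c, y.1, y.2).

(* F_j of the paper (j = 0 is F_1, j = 1 is F_2) *)
Definition Fsucc (d K : nat) (M : 'I_K -> Op ('I_d * 'I_d * 'I_d)%type)
  (U : 'I_K -> 'I_2 -> Op 'I_d) (rho : Op ('I_d * 'I_d)%type) (j : 'I_2) : C :=
  \sum_i optr (opmul (psiplus (d := d))
      (opmul (opmul (kron (opid (T := 'I_d)) (U i j)) (reduce j (postM M rho i)))
             (opadj (kron (opid (T := 'I_d)) (U i j))))).

End QDefs.

(* Decomposing rho and every POVM element into rank-one terms writes each F_j as
   a sum, over pure post-measurement vectors h on A'_1 A'_2 B whose squared norms
   add up to 1, of the fidelity of (1 (x) U) tr |h><h| (1 (x) U)^* with psi+.
   For one such h both fidelities are of the form <g, g> and <k, k>, where g and k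
   are the orthogonal projections of h on two lines; unitarity and Cauchy-Schwarz
   bound their overlap by |<g, k>|^2 <= <g, g> <k, k> / d^2.  Hence
   p <g, g> + (1 - p) <k, k> <= lam |h|^2, with lam the largest eigenvalue of
   p |u><u| + (1 - p) |v><v| for unit vectors with |<u, v>|^2 = 1 / d^2, which is
   the right-hand side of the theorem. *)

From HB Require Import structures.
From mathcomp Require Import all_boot all_order all_algebra.
From mathcomp Require Import complex.
From mathcomp Require Import reals.
From mathcomp Require Import ring lra.
Import Order.TTheory GRing.Theory Num.Theory.
Local Open Scope complex_scope.
Local Open Scope ring_scope.
Set Implicit Arguments. Unset Strict Implicit. Unset Printing Implicit Defensive.

Section FiniteSums.
Variable V : nmodType.

Lemma sum_single (A : finType) (a0 : A) (F : A -> V) :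
  (forall a, a != a0 -> F a = 0) -> \sum_a F a = F a0.
Proof. by move=> F0; rewrite (bigD1 a0) //= big1 ?addr0 // => a /F0. Qed.

Lemma sum_pair (A B : finType) (F : A * B -> V) : \sum_p F p = \sum_a \sum_b F (a, b).
Proof. by rewrite pair_bigA; apply: eq_bigr => -[]. Qed.

Lemma sum_triple (A B D : finType) (F : A * B * D -> V) :
  \sum_x F x = \sum_a \sum_b \sum_c F (a, b, c).
Proof. by rewrite !sum_pair. Qed.

Lemma sum_pair_fst (A B : finType) (a0 : A) (F : A * B -> V) :
  (forall p, p.1 != a0 -> F p = 0) -> \sum_p F p = \sum_b F (a0, b).
Proof.
by move=> F0; rewrite sum_pair (@sum_single _ a0) // => a a_neq; apply: big1 => b _; apply: F0.
Qed.

End FiniteSums.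

Arguments sum_single {V A} a0 {F}.
Arguments sum_pair_fst {V A B} a0 {F}.

Section PsdRankOneDecomposition.
Variables (R : realType) (T : finType).
Local Notation C := R[i].
Implicit Types (A : Op R T) (u v : T -> C).

Definition form A u v : C := \sum_x \sum_y (u x)^* * A x y * v y.
Definition basis (x : T) : T -> C := fun a => (a == x)%:R.

Lemma sum_basisl (x : T) (F : T -> C) : \sum_a (a == x)%:R * F a = F x.
Proof. by rewrite (sum_single x) ?eqxx ?mul1r // => a /negPf ->; rewrite mul0r. Qed.

Lemma sum_basisr (x : T) (F : T -> C) : \sum_a F a * (a == x)%:R = F x.
Proof. by rewrite -[RHS]sum_basisl; apply: eq_bigr => a _; rewrite mulrC. Qed.

Lemma form_basisl A x v : form A (basis x) v = \sum_y A x y * v y.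
Proof.
rewrite /form -(sum_basisl x (fun a => \sum_y A a y * v y)); apply: eq_bigr => a _.
by rewrite mulr_sumr; apply: eq_bigr => b _; rewrite rmorph_nat mulrA.
Qed.

Lemma form_basis A x y : form A (basis x) (basis y) = A x y.
Proof. by rewrite form_basisl sum_basisr. Qed.

Lemma form_shift A u v t :
  form A (fun a => u a + t * v a) (fun a => u a + t * v a)
  = form A u u + t * form A u v + t^* * form A v u + t^* * t * form A v v.
Proof.
rewrite /form !mulr_sumr -!big_split; apply: eq_bigr => x _.
rewrite !mulr_sumr -!big_split; apply: eq_bigr => y _.
rewrite rmorphD rmorphM /=; ring.
Qed.

Lemma psd_diag_ge0 A x : psd A -> 0 <= A x x.
Proof. by move/(_ (basis x)); rewrite -/(form _ _ _) form_basis. Qed.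

Lemma psd_basis_shift A x y t : psd A ->
  0 <= A x x + t * A x y + t^* * A y x + t^* * t * A y y.
Proof.
by move/(_ (fun a => basis x a + t * basis y a)); rewrite -/(form _ _ _) form_shift !form_basis.
Qed.

Lemma psd_adj A x y : psd A -> A y x = (A x y)^*.
Proof.
move=> psdA; set z := A x y - (A y x)^*.
(* the form at [basis x + t basis y] is real for every [t] *)
have real_tz t : t * z = t^* * z^*.
  have := psd_basis_shift x y t psdA; set q := (X in 0 <= X) => /geC0_conj qJ.
  apply/eqP; rewrite -subr_eq0 -(subrr q) -{2}qJ /q /z; apply/eqP.
  rewrite !(rmorphD, rmorphM, rmorphN) /= !conjCK.
  rewrite (geC0_conj (psd_diag_ge0 x psdA)) (geC0_conj (psd_diag_ge0 y psdA)); ring.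
have zJ : z^* = z by rewrite -[LHS]mul1r -conjC1 -real_tz mul1r.
have : 'i * z = - ('i * z) by rewrite {1}real_tz conjCi zJ mulNr.
move/eqP; rewrite -subr_eq0 opprK -mulr2n mulrn_eq0 /= mulf_eq0 (negPf (neq0Ci C)) /=.
by rewrite subr_eq0 => /eqP ->; rewrite conjCK.
Qed.

Lemma psd_diag0_row A x y : psd A -> A x x = 0 -> A x y = 0.
Proof.
move=> psdA Axx0; apply/eqP/negP => /negP a_neq0; set a := A x y in a_neq0.
set n := a * a^*.
have n_neq0 : n != 0 by rewrite mul_conjC_eq0.
set s := (A y y + 1) / (2 * n).
have sJ : s^* = s.
  apply: geC0_conj; apply: divr_ge0; first by rewrite addr_ge0 ?psd_diag_ge0.
  by rewrite mulr_ge0 ?mul_conjC_ge0.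
(* the test vector [basis y - s a basis x] has form value [-1] *)
have := psd_basis_shift y x (- s * a) psdA.
rewrite (psd_adj x y psdA) -/a Axx0 mulr0 addr0 rmorphM rmorphN /= sJ.
have -> : A y y + - s * a * a^* + - s * a^* * a = A y y - s * (2 * n) by rewrite /n; ring.
rewrite /s divfK; last by rewrite mulf_neq0 // pnatr_eq0.
by rewrite opprD addrA subrr add0r ler0N1.
Qed.

Lemma form_basisr A u y : form A u (basis y) = \sum_x (u x)^* * A x y.
Proof. by apply: eq_bigr => x _; rewrite sum_basisr. Qed.

Lemma form_adj A u v : psd A -> form A v u = (form A u v)^*.
Proof.
move=> psdA; rewrite /form exchange_big rmorph_sum /=; apply: eq_bigr => y _.
rewrite rmorph_sum; apply: eq_bigr => x _.
rewrite !rmorphM /= conjCK (psd_adj y x psdA); ring.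
Qed.

Lemma form_sub_rank1 A w v :
  form (fun y z => A y z - w y * (w z)^*) v v
  = form A v v - (\sum_x (v x)^* * w x) * (\sum_x (v x)^* * w x)^*.
Proof.
rewrite rmorph_sum mulr_suml /form -sumrB; apply: eq_bigr => x _.
rewrite mulr_sumr -sumrB; apply: eq_bigr => y _.
rewrite rmorphM /= conjCK; ring.
Qed.

Definition pivot A x0 : T -> C := fun y => A y x0 / sqrtC (A x0 x0).

Lemma psd_schur_complement A x0 : psd A -> A x0 x0 != 0 ->
  psd (fun y z => A y z - pivot A x0 y * (pivot A x0 z)^*).
Proof.
move=> psdA r_neq0 v; rewrite -/(form _ v v) form_sub_rank1.
set r := A x0 x0 in r_neq0 *; set sr := sqrtC r; set b := form A (basis x0) v.
have r_ge0 : 0 <= r := psd_diag_ge0 x0 psdA.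
have srJ : sr^* = sr by apply: geC0_conj; rewrite sqrtC_ge0.
have srr : sr * sr = r by rewrite -expr2 sqrtCK.
have sr_neq0 : sr != 0 by rewrite sqrtC_eq0.
have bJ : form A v (basis x0) = b^* := form_adj _ _ psdA.
have -> : \sum_x (v x)^* * pivot A x0 x = b^* / sr.
  by rewrite -bJ form_basisr mulr_suml; apply: eq_bigr => y _; rewrite mulrA.
rewrite rmorphM fmorphV /= conjCK srJ.
have := psdA (fun a => v a + (- b / r) * basis x0 a).
rewrite -/(form _ _ _) form_shift bJ -/b form_basis rmorphM rmorphN fmorphV /= (geC0_conj r_ge0).
by congr (0 <= _); rewrite -/r -srr; field.
Qed.

Lemma psd_rank1_decomp_on n (S : {set T}) A : #|S| = n -> psd A ->
    (forall x y, x \notin S -> A x y = 0) ->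
  exists vs : seq (T -> C), forall x y, A x y = \sum_(v <- vs) v x * (v y)^*.
Proof.
elim: n S A => [|n IHn] S A cardS psdA suppA.
  by exists [::] => x y; rewrite big_nil suppA // (cards0_eq cardS) inE.
have /set0Pn[x0 x0S] : S != set0 by rewrite -card_gt0 cardS.
have cardS' : #|S :\ x0| = n by move: cardS; rewrite (cardsD1 x0) x0S add1n => -[].
have supp' (B : Op R T) : (forall x y, x \notin S -> B x y = 0) ->
    (forall y, B x0 y = 0) -> forall x y, x \notin S :\ x0 -> B x y = 0.
  move=> B0 Bx0 x y; rewrite !inE negb_and negbK => /orP[/eqP ->|]; [exact: Bx0 | exact: B0].
have [r0|r_neq0] := eqVneq (A x0 x0) 0.
  by apply: (IHn (S :\ x0)) => //; apply: supp' => // y; apply: psd_diag0_row.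
set w := pivot A x0.
have [vs Avs] : exists vs : seq (T -> C),
    forall x y, A x y - w x * (w y)^* = \sum_(v <- vs) v x * (v y)^*.
  apply: (IHn _ _ cardS' (psd_schur_complement psdA r_neq0)); apply: supp' => [x y xS|y].
    by rewrite /w /pivot (suppA x y xS) (suppA x x0 xS) !mul0r subr0.
  have srJ : (sqrtC (A x0 x0))^* = sqrtC (A x0 x0).
    by apply: geC0_conj; rewrite sqrtC_ge0 psd_diag_ge0.
  rewrite /w /pivot rmorphM fmorphV /= srJ -(psd_adj y x0 psdA) -{1}(sqrtCK (A x0 x0)).
  by field; rewrite sqrtC_eq0.
by exists (w :: vs) => x y; rewrite big_cons -Avs addrC subrK.
Qed.

Lemma psd_rank1_decomp A : psd A ->
  exists vs : seq (T -> C), forall x y, A x y = \sum_(v <- vs) v x * (v y)^*.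
Proof.
by move=> psdA; apply: (@psd_rank1_decomp_on _ [set: T] _ erefl psdA) => x y; rewrite in_setT.
Qed.

End PsdRankOneDecomposition.

Section TwoProjectionBound.
Variable R : rcfType.

Lemma quad2_ge0 (al be ga a b : R) : 0 <= al -> 0 <= ga -> be ^+ 2 <= al * ga ->
  0 <= al * a ^+ 2 - 2 * be * a * b + ga * b ^+ 2.
Proof.
move=> al_ge0 ga_ge0 det_ge0.
have [algaE|/negPf alga_neq0] := eqVneq (al + ga) 0.
  have al0 : al = 0 by lra.
  have ga0 : ga = 0 by lra.
  have be0 : be = 0 by move: det_ge0; rewrite al0 mul0r; nra.
  by rewrite al0 ga0 be0; lra.
have alga_gt0 : 0 < al + ga by rewrite lt0r alga_neq0 addr_ge0.
rewrite -(pmulr_rge0 _ alga_gt0).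
have -> : (al + ga) * (al * a ^+ 2 - 2 * be * a * b + ga * b ^+ 2) =
   (al * a - be * b) ^+ 2 + (ga * b - be * a) ^+ 2 + (al * ga - be ^+ 2) * (a ^+ 2 + b ^+ 2).
  by ring.
by rewrite addr_ge0 ?addr_ge0 ?sqr_ge0 // mulr_ge0 ?subr_ge0 // addr_ge0 ?sqr_ge0.
Qed.

(* The largest eigenvalue of [p |u><u| + (1 - p) |v><v|] for unit vectors with
   [|<u, v>|^2 = c]. *)
Definition qbound (c p : R) : R := (1 + Num.sqrt (1 - 4 * (1 - c) * p * (1 - p))) / 2.

Section QBound.
Variables c p : R.
Hypotheses (c_ge0 : 0 <= c) (c_le1 : c <= 1) (p_ge0 : 0 <= p) (p_le1 : p <= 1).
Let D := 1 - 4 * (1 - c) * p * (1 - p).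

Let D_ge : (2 * p - 1) ^+ 2 <= D.
Proof.
have : 0 <= c * (p * (1 - p)) by rewrite !mulr_ge0 ?subr_ge0.
rewrite /D; nra.
Qed.

Let sqrtDK : Num.sqrt D ^+ 2 = D.
Proof. by rewrite sqr_sqrtr // (le_trans _ D_ge) ?sqr_ge0. Qed.

Lemma qbound_root : qbound c p ^+ 2 - qbound c p + (1 - c) * p * (1 - p) = 0.
Proof.
rewrite /qbound -/D.
have -> : ((1 + Num.sqrt D) / 2) ^+ 2 - (1 + Num.sqrt D) / 2 = (Num.sqrt D ^+ 2 - 1) / 4 by field.
by rewrite sqrtDK /D; field.
Qed.

Let abs_le_sqrtD : `|2 * p - 1| <= Num.sqrt D.
Proof. by rewrite -sqrtr_sqr ler_wsqrtr. Qed.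

Lemma qbound_ge_p : p <= qbound c p.
Proof. by move: abs_le_sqrtD; rewrite /qbound -/D ler_norml; lra. Qed.

Lemma qbound_ge_1p : 1 - p <= qbound c p.
Proof. by move: abs_le_sqrtD; rewrite /qbound -/D ler_norml; lra. Qed.

Lemma qbound_gram2 (A B m : R) : 0 < A -> 0 < B -> m ^+ 2 <= c * (A * B) ->
  (A * B - m ^+ 2) * (p * A + (1 - p) * B) <= qbound c p * (A * B * (A + B - 2 * m)).
Proof.
move=> A_gt0 B_gt0 m2_le.
have lam_p := qbound_ge_p; have lam_1p := qbound_ge_1p; have lam_root := qbound_root.
set lam := qbound c p in lam_p lam_1p lam_root *.
set a := Num.sqrt A; set b := Num.sqrt B.
have aA : a ^+ 2 = A by rewrite sqr_sqrtr ?ltW.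
have bB : b ^+ 2 = B by rewrite sqr_sqrtr ?ltW.
have ab_gt0 : 0 < a * b by rewrite mulr_gt0 ?sqrtr_gt0.
set mu := m / (a * b).
have mE : m = mu * (a * b) by rewrite /mu divfK ?gt_eqF.
have mu2_le : mu ^+ 2 <= c.
  rewrite -(ler_pM2r (mulr_gt0 A_gt0 B_gt0)).
  by have -> : mu ^+ 2 * (A * B) = m ^+ 2 by rewrite mE -aA -bB; ring.
have mu2_ge0 : 0 <= mu ^+ 2 := sqr_ge0 mu.
have pp_ge0 : 0 <= p * (1 - p) by rewrite mulr_ge0 ?subr_ge0.
rewrite -subr_ge0.
have -> : lam * (A * B * (A + B - 2 * m)) - (A * B - m ^+ 2) * (p * A + (1 - p) * B) =
    (a * b) ^+ 2 * ((lam - p * (1 - mu ^+ 2)) * a ^+ 2 - 2 * (lam * mu) * a * b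
                   + (lam - (1 - p) * (1 - mu ^+ 2)) * b ^+ 2).
  by rewrite mE -aA -bB; ring.
have : 0 <= p * mu ^+ 2 by rewrite mulr_ge0.
have : 0 <= (1 - p) * mu ^+ 2 by rewrite mulr_ge0 ?subr_ge0.
move=> pmu2_ge0 qmu2_ge0; rewrite mulr_ge0 ?sqr_ge0 // quad2_ge0 //; [lra | lra |].
have -> : (lam * mu) ^+ 2 = (lam - p * (1 - mu ^+ 2)) * (lam - (1 - p) * (1 - mu ^+ 2))
    - (1 - mu ^+ 2) * (p * (1 - p)) * (c - mu ^+ 2)
    - (1 - mu ^+ 2) * (lam ^+ 2 - lam + (1 - c) * p * (1 - p)) by ring.
rewrite lam_root mulr0 subr0 gerBl.
by rewrite !mulr_ge0 ?subr_ge0 // (le_trans mu2_le).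
Qed.

End QBound.

Section Gram3.
Variables X A B m : R.
(* [gram_ge0] is [<v, v> >= 0] for [v = e f - s g - t k], where [<f, f> = X],
   [<f, g> = <g, g> = A], [<f, k> = <k, k> = B] and [Re <g, k> = m]. *)
Hypothesis gram_ge0 : forall e s t : R,
  0 <= e ^+ 2 * X + s ^+ 2 * A + t ^+ 2 * B - 2 * e * s * A - 2 * e * t * B + 2 * s * t * m.

Lemma gram3_schur : 0 < A * B - m ^+ 2 ->
  A * B * (A + B - 2 * m) <= (A * B - m ^+ 2) * X.
Proof.
set D := A * B - m ^+ 2 => D_gt0.
have := gram_ge0 D (B * (A - m)) (A * (B - m)).
have -> : D ^+ 2 * X + (B * (A - m)) ^+ 2 * A + (A * (B - m)) ^+ 2 * B
    - 2 * D * (B * (A - m)) * A - 2 * D * (A * (B - m)) * B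
    + 2 * (B * (A - m)) * (A * (B - m)) * m = D * (D * X - A * B * (A + B - 2 * m)).
  by rewrite /D; ring.
by rewrite pmulr_rge0 // subr_ge0.
Qed.

Lemma gram3_qbound (c p : R) : 0 <= c < 1 -> 0 <= p <= 1 ->
  m ^+ 2 <= c * (A * B) -> p * A + (1 - p) * B <= qbound c p * X.
Proof.
move=> /andP[c_ge0 c_lt1] /andP[p_ge0 p_le1] m2_le.
have A_ge0 : 0 <= A by have := gram_ge0 0 1 0; lra.
have B_ge0 : 0 <= B by have := gram_ge0 0 0 1; lra.
have lam_p : p <= qbound c p by apply: qbound_ge_p => //; lra.
have lam_1p : 1 - p <= qbound c p by apply: qbound_ge_1p => //; lra.
have A_le : A <= X by have := gram_ge0 1 1 0; lra.
have B_le : B <= X by have := gram_ge0 1 0 1; lra.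
have [A0|A_neq0] := eqVneq A 0; first by rewrite A0; nra.
have [B0|B_neq0] := eqVneq B 0; first by rewrite B0; nra.
have A_gt0 : 0 < A by rewrite lt0r A_neq0.
have B_gt0 : 0 < B by rewrite lt0r B_neq0.
have D_gt0 : 0 < A * B - m ^+ 2.
  have : 0 < (1 - c) * (A * B) by rewrite mulr_gt0 ?subr_gt0 ?mulr_gt0.
  lra.
have lam_gram2 : (A * B - m ^+ 2) * (p * A + (1 - p) * B)
    <= qbound c p * (A * B * (A + B - 2 * m)) by apply: qbound_gram2 => //; lra.
rewrite -(ler_pM2l D_gt0) mulrCA (le_trans lam_gram2) //.
by rewrite ler_wpM2l ?gram3_schur // (le_trans _ lam_p).
Qed.

End Gram3.
End TwoProjectionBound.

Section Dot.
Variables (R : rcfType) (T : finType).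
Local Notation C := R[i].
Implicit Types f g k : T -> C.

Definition dot f g : C := \sum_x (f x)^* * g x.

Lemma dot_ge0 f : 0 <= dot f f.
Proof. by apply: sumr_ge0 => x _; rewrite mulrC mul_conjC_ge0. Qed.

Lemma conj_dot f g : (dot f g)^* = dot g f.
Proof.
by rewrite rmorph_sum; apply: eq_bigr => x _; rewrite rmorphM /= conjCK mulrC.
Qed.

Lemma dot_lin3 f g k (a b e : C) :
  let v x := a * f x + b * g x + e * k x in
  dot v v = a^* * a * dot f f + a^* * b * dot f g + a^* * e * dot f k
          + b^* * a * dot g f + b^* * b * dot g g + b^* * e * dot g k
          + e^* * a * dot k f + e^* * b * dot k g + e^* * e * dot k k.
Proof.
rewrite /dot !mulr_sumr -!big_split; apply: eq_bigr => x _.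
rewrite !rmorphD !rmorphM /=; ring.
Qed.

Lemma dot_cauchy_schwarz f g : dot f g * (dot f g)^* <= dot f f * dot g g.
Proof.
have [F0|F_neq0] := eqVneq (dot f f) 0.
  have f0 x : f x = 0.
    move/eqP: F0; rewrite psumr_eq0 => [/allP/(_ x (mem_index_enum x))|y _].
      by rewrite mulrC mul_conjC_eq0 => /eqP.
    by rewrite mulrC mul_conjC_ge0.
  have -> : dot f g = 0 by apply: big1 => x _; rewrite f0 rmorph0 mul0r.
  by rewrite F0 !mul0r.
have F_gt0 : 0 < dot f f by rewrite lt0r F_neq0 dot_ge0.
have := dot_ge0 (fun x => (dot f f) * g x + (- dot f g) * f x + 0 * f x).
rewrite dot_lin3 rmorphN rmorph0 /= !conj_dot !(mul0r, mulr0, addr0).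
have -> : dot f f * dot f f * dot g g + dot f f * - dot f g * dot g f
    + - dot g f * dot f f * dot f g + - dot g f * - dot f g * dot f f
  = dot f f * (dot f f * dot g g - dot f g * dot g f) by ring.
by rewrite pmulr_rge0 // subr_ge0 -conj_dot.
Qed.

(* [dot f g = dot g g] says that [g] is the orthogonal projection of [f] on [C g]. *)
Lemma dot_overlap_qbound f g k (c p : R) : 0 <= c < 1 -> 0 <= p <= 1 ->
    dot f g = dot g g -> dot f k = dot k k ->
    dot g k * (dot g k)^* <= c%:C * (dot g g * dot k k) ->
  p%:C * dot g g + (1 - p)%:C * dot k k <= (qbound c p)%:C * dot f f.
Proof.
move=> c01 p01 fgE fkE overlap.
have ReK h : (complex.Re (dot h h))%:C = dot h h by rewrite RRe_real ?ger0_real ?dot_ge0.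
set X := complex.Re (dot f f); set A := complex.Re (dot g g); set B := complex.Re (dot k k).
set z := dot g k; set m := complex.Re z.
have zJ : z^* = 2%:R * m%:C - z by rewrite -(addcJ z) addrC addKr.
have conjR (x : R) : (x%:C)^* = x%:C :> C by exact: conjc_real.
have XE : dot f f = X%:C by rewrite ReK.
have AE : dot g g = A%:C by rewrite ReK.
have BE : dot k k = B%:C by rewrite ReK.
have gram e s t : 0 <= e ^+ 2 * X + s ^+ 2 * A + t ^+ 2 * B
    - 2 * e * s * A - 2 * e * t * B + 2 * s * t * m.
  rewrite -ler0c.
  have := dot_ge0 (fun x => e%:C * f x + (- s)%:C * g x + (- t)%:C * k x).
  rewrite dot_lin3 !conjR -[dot g f]conj_dot -[dot k f]conj_dot -[dot k g]conj_dot.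
  rewrite fgE fkE (conj_dot g g) (conj_dot k k) -/z zJ XE AE BE.
  move/le_trans; apply; rewrite le_eqVlt; apply/orP; left; apply/eqP.
  by rewrite !(rmorphD, rmorphB, rmorphN, rmorphM, rmorphXn, rmorph_nat) /=; ring.
have m2_le : m ^+ 2 <= c * (A * B).
  rewrite -lecR; apply: le_trans (_ : (m ^+ 2 + complex.Im z ^+ 2)%:C <= _).
    by rewrite lecR lerDl sqr_ge0.
  by rewrite add_Re2_Im2 normCK !rmorphM /= -AE -BE.
rewrite XE AE BE -!rmorphM -rmorphD lecR.
exact: gram3_qbound.
Qed.
End Dot.

Section OneVectorBound.
Variables (R : realType) (d : nat).
Hypothesis d_gt0 : (0 < d)%N.
Local Notation C := R[i].
Local Notation I := 'I_d.
Local Notation V3 := ((I * I * I)%type -> C).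
Implicit Types (U : Op R I) (h : V3).

Lemma unitary_rows U : unitary U -> forall a a', \sum_b U a b * (U a' b)^* = (a == a')%:R.
Proof. by case=> _ UU a a'; have := congr1 (fun F => F a a') UU. Qed.

Lemma unitary_norm U (w : I -> C) : unitary U ->
  \sum_b (\sum_a U a b * w a) * (\sum_a U a b * w a)^* = \sum_a w a * (w a)^*.
Proof.
move=> unitU.
transitivity (\sum_a \sum_a' w a * (w a')^* * \sum_b U a b * (U a' b)^*).
  under eq_bigr => b _ do rewrite rmorph_sum mulr_suml.
  rewrite exchange_big; apply: eq_bigr => a _.
  under eq_bigr => b _ do rewrite mulr_sumr.
  rewrite exchange_big; apply: eq_bigr => a' _.
  by rewrite mulr_sumr; apply: eq_bigr => b _; rewrite rmorphM /=; ring.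
apply: eq_bigr => a _; rewrite (sum_single a) => [|a' a'a].
  by rewrite unitary_rows // eqxx mulr1.
by rewrite unitary_rows // eq_sym (negPf a'a) mulr0.
Qed.

Lemma unitary_sum_sqr U : unitary U -> \sum_a \sum_b U a b * (U a b)^* = d%:R.
Proof.
by move=> unitU; under eq_bigr => a _ do rewrite unitary_rows // eqxx; rewrite sumr_const card_ord.
Qed.

(* For a pure post-measurement vector [h] on [A'_1 A'_2 B], [succ U h] is the
   fidelity of [(1 (x) U) tr_A'_2 |h><h| (1 (x) U)^*] with [psi+], and
   [guess_vec U h] is a vector [g] with [<h, g> = <g, g> = succ U h]. *)
Definition slice h (e : I) : (I * I)%type -> C := fun q => h (q.1, e, q.2).
Definition amp U (g : (I * I)%type -> C) : C := \sum_c \sum_f U c f * g (c, f).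
Definition succ U h : C := d%:R^-1 * \sum_e amp U (slice h e) * (amp U (slice h e))^*.
Definition guess_vec U h : V3 := fun x => (U x.1.1 x.2)^* * amp U (slice h x.1.2) / d%:R.

Lemma conj_amp U g : (amp U g)^* = \sum_c \sum_f (U c f)^* * (g (c, f))^*.
Proof.
rewrite rmorph_sum; apply: eq_bigr => c _.
by rewrite rmorph_sum; apply: eq_bigr => f _; rewrite rmorphM.
Qed.

Lemma dot_guess_vec U h : dot h (guess_vec U h) = succ U h.
Proof.
rewrite /succ /dot sum_triple exchange_big mulr_sumr; apply: eq_bigr => e _.
rewrite conj_amp !mulr_sumr; apply: eq_bigr => c _.
by rewrite !mulr_sumr; apply: eq_bigr => f _; rewrite /guess_vec /=; ring.
Qed.

Lemma dot_guess_vecK U h : unitary U -> dot (guess_vec U h) (guess_vec U h) = succ U h.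
Proof.
move=> unitU; rewrite /succ /dot sum_triple exchange_big mulr_sumr; apply: eq_bigr => e _.
transitivity ((\sum_c \sum_f U c f * (U c f)^*)
              * ((amp U (slice h e))^* * amp U (slice h e) / d%:R ^+ 2)).
  rewrite mulr_suml; apply: eq_bigr => c _; rewrite mulr_suml; apply: eq_bigr => f _.
  by rewrite /guess_vec /= !rmorphM fmorphV /= conjCK rmorph_nat expr2 invfM; ring.
by rewrite unitary_sum_sqr // expr2 invfM; field; rewrite pnatr_eq0 -lt0n.
Qed.

Definition swap12 (x : I * I * I) : I * I * I := (x.1.2, x.1.1, x.2).

Lemma swap12K : involutive swap12. Proof. by case=> [[]]. Qed.

Lemma dot_swap12 (f g : V3) : dot (f \o swap12) (g \o swap12) = dot f g.
Proof. by rewrite [RHS](reindex_inj (can_inj swap12K)). Qed.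

Lemma guess_vec_overlap U1 U2 h : unitary U1 -> unitary U2 ->
  dot (guess_vec U1 h) (guess_vec U2 (h \o swap12) \o swap12)
  * (dot (guess_vec U1 h) (guess_vec U2 (h \o swap12) \o swap12))^*
  <= (d%:R ^+ 2)^-1 * (succ U1 h * succ U2 (h \o swap12)).
Proof.
move=> unitU1 unitU2.
set P := guess_vec U1 h; set Q := guess_vec U2 (h \o swap12) \o swap12.
set u := fun e => amp U1 (slice h e); set w := fun e => amp U2 (slice (h \o swap12) e).
set y := fun b => \sum_a U2 a b * u a; set z := fun b => \sum_a U1 a b * w a.
have d_neq0 : (d%:R : C) != 0 by rewrite pnatr_eq0 -lt0n.
have PQE : dot P Q = (d%:R ^+ 2)^-1 * dot y z.
  rewrite /dot sum_triple exchange_big.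
  under eq_bigr => a2 _ do rewrite exchange_big.
  rewrite exchange_big mulr_sumr; apply: eq_bigr => b _.
  rewrite /y rmorph_sum mulr_suml mulr_sumr; apply: eq_bigr => a2 _.
  rewrite /z mulr_sumr mulr_sumr; apply: eq_bigr => a1 _.
  by rewrite /P /Q /u /w /guess_vec /= !rmorphM fmorphV /= conjCK rmorph_nat expr2 invfM; ring.
have normE (U : Op R I) (v : I -> C) : unitary U ->
    dot (fun b => \sum_a U a b * v a) (fun b => \sum_a U a b * v a) = \sum_a v a * (v a)^*.
  by move=> unitU; rewrite -(unitary_norm v unitU); apply: eq_bigr => b _; rewrite mulrC.
have yyE : dot y y = d%:R * succ U1 h by rewrite normE // /succ mulrA mulfV // mul1r.
have zzE : dot z z = d%:R * succ U2 (h \o swap12) by rewrite normE // /succ mulrA mulfV // mul1r.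
rewrite PQE rmorphM fmorphV rmorphXn rmorph_nat /=.
have -> : (d%:R ^+ 2)^-1 * dot y z * ((d%:R ^+ 2)^-1 * (dot y z)^*)
        = ((d%:R ^+ 2)^-1) ^+ 2 * (dot y z * (dot y z)^*) by ring.
have -> : (d%:R ^+ 2)^-1 * (succ U1 h * succ U2 (h \o swap12))
        = ((d%:R ^+ 2)^-1) ^+ 2 * (dot y y * dot z z) by rewrite yyE zzE; field.
by rewrite ler_wpM2l ?exprn_ge0 ?invr_ge0 ?exprn_ge0 ?ler0n ?dot_cauchy_schwarz.
Qed.

Lemma succ_qbound U1 U2 h (p : R) : (1 < d)%N -> 0 <= p <= 1 ->
    unitary U1 -> unitary U2 ->
  p%:C * succ U1 h + (1 - p)%:C * succ U2 (h \o swap12)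
  <= (qbound ((d%:R : R) ^+ 2)^-1 p)%:C * dot h h.
Proof.
move=> d_gt1 p01 unitU1 unitU2.
set P := guess_vec U1 h; set Q := guess_vec U2 (h \o swap12) \o swap12.
have PPE : dot P P = succ U1 h by rewrite dot_guess_vecK.
have QQE : dot Q Q = succ U2 (h \o swap12) by rewrite dot_swap12 dot_guess_vecK.
have hQE : dot h Q = succ U2 (h \o swap12).
  by rewrite -dot_guess_vec -[RHS]dot_swap12; apply: eq_bigr => x _; rewrite /= swap12K.
rewrite -PPE -QQE; apply: dot_overlap_qbound => //.
- apply/andP; split; first by rewrite invr_ge0 exprn_ge0 ?ler0n.
  by rewrite invf_lt1 ?exprn_gt0 ?ltr0n ?exprn_egt1 ?ltr1n.
- by rewrite PPE dot_guess_vec.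
- by rewrite QQE hQE.
by rewrite PPE QQE fmorphV rmorphXn rmorph_nat guess_vec_overlap.
Qed.

End OneVectorBound.

Section Protocol.
Variables (R : realType) (d : nat).
Local Notation C := R[i].
Local Notation I := 'I_d.
Local Notation V3 := ((I * I * I)%type -> C).

Lemma Omega_entry (rho : Op R (I * I)%type) (w x z y : I * I * I) :
  Omega rho (w, x) (z, y) =
  ((x.1.1 == w.1.1) && (y.1.1 == z.1.1))%:R / d%:R
  * (((x.1.2 == w.1.2) && (y.1.2 == z.1.2))%:R / d%:R) * rho (w.2, x.2) (z.2, y.2).
Proof.
by case: w => [[? ?] ?]; case: x => [[? ?] ?]; case: z => [[? ?] ?]; case: y => [[? ?] ?].
Qed.

Lemma postM_entry K (M : 'I_K -> Op R (I * I * I)%type) rho i x y :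
  postM M rho i x y = (d%:R ^+ 2)^-1 *
    \sum_zt \sum_wt M i (y.1.1, y.1.2, zt) (x.1.1, x.1.2, wt) * rho (wt, x.2) (zt, y.2).
Proof.
transitivity (\sum_z \sum_w M i z w * Omega rho (w, x) (z, y)).
  rewrite /postM /ptr1 /opmul; apply: eq_bigr => z _; rewrite sum_pair; apply: eq_bigr => w _.
  rewrite (sum_single x) => [|b xb]; first by rewrite /kron /opid /= eqxx mulr1.
  by rewrite /kron /opid /= eq_sym (negPf xb) mulr0 mul0r.
rewrite sum_triple (sum_single y.1.1) => [|a ya]; last first.
  apply: big1 => b _; apply: big1 => c _; apply: big1 => w _.
  by rewrite Omega_entry /= (eq_sym y.1.1) (negPf ya) andbF !(mul0r, mulr0).
rewrite (sum_single y.1.2) => [|b yb]; last first.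
  apply: big1 => c _; apply: big1 => w _.
  by rewrite Omega_entry /= (eq_sym y.1.2) (negPf yb) andbF !(mul0r, mulr0).
rewrite mulr_sumr; apply: eq_bigr => zt _.
rewrite sum_triple (sum_single x.1.1) => [|a xa]; last first.
  apply: big1 => b _; apply: big1 => c _.
  by rewrite Omega_entry /= (eq_sym x.1.1) (negPf xa) !(mul0r, mulr0).
rewrite (sum_single x.1.2) => [|b xb]; last first.
  apply: big1 => c _.
  by rewrite Omega_entry /= (eq_sym x.1.2) (negPf xb) !(mul0r, mulr0).
rewrite mulr_sumr; apply: eq_bigr => wt _.
rewrite Omega_entry /= !eqxx /= !mul1r expr2 invfM -!surjective_pairing; ring.
Qed.

(* The post-measurement vector [(<m| (x) 1) |psi+>|psi+>|r>] on [A'_1 A'_2 B]. *)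
Definition postvec (m : V3) (r : (I * I)%type -> C) : V3 :=
  fun x => d%:R^-1 * \sum_wt (m (x.1.1, x.1.2, wt))^* * r (wt, x.2).

Lemma postM_rank1 K (M : 'I_K -> Op R (I * I * I)%type) rho i ms rs :
    (forall a b, M i a b = \sum_(m <- ms) m a * (m b)^*) ->
    (forall s t, rho s t = \sum_(r <- rs) r s * (r t)^*) ->
  forall x y, postM M rho i x y
              = \sum_(m <- ms) \sum_(r <- rs) postvec m r x * (postvec m r y)^*.
Proof.
move=> Mms rhors x y; rewrite postM_entry.
transitivity (\sum_zt \sum_wt \sum_(m <- ms) \sum_(r <- rs)
   (d%:R ^+ 2)^-1 * (m (y.1.1, y.1.2, zt) * (m (x.1.1, x.1.2, wt))^*)
   * (r (wt, x.2) * (r (zt, y.2))^*)).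
  rewrite mulr_sumr; apply: eq_bigr => zt _; rewrite mulr_sumr; apply: eq_bigr => wt _.
  rewrite Mms rhors mulr_suml mulr_sumr; apply: eq_bigr => m _.
  by rewrite !mulr_sumr; apply: eq_bigr => r _; ring.
under eq_bigr => zt _ do rewrite exchange_big.
under eq_bigr => zt _ do under eq_bigr => m _ do rewrite exchange_big.
rewrite exchange_big; apply: eq_bigr => m _.
rewrite exchange_big; apply: eq_bigr => r _.
rewrite /postvec rmorphM rmorph_sum fmorphV rmorph_nat /= mulrACA mulr_suml mulr_sumr.
rewrite exchange_big; apply: eq_bigr => wt _.
rewrite !mulr_sumr; apply: eq_bigr => zt _.
rewrite !rmorphM /= conjCK expr2 invfM; ring.
Qed.

Definition fid (U : Op R I) (X : Op R (I * I)%type) : C :=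
  d%:R^-1 * \sum_a \sum_c \sum_h \sum_f U c f * X (c, f) (a, h) * (U a h)^*.

Lemma optr_psiplus_conj (U : Op R I) (X : Op R (I * I)%type) :
  optr (opmul (psiplus R (d := d))
      (opmul (opmul (kron (opid R (T := I)) U) X) (opadj (kron (opid R (T := I)) U))))
  = fid U X.
Proof.
rewrite /optr /fid mulr_sumr sum_pair; apply: eq_bigr => a _.
rewrite (sum_single a) => [|b ab]; last first.
  by rewrite /opmul; apply: big1 => z _; rewrite /psiplus /= eq_sym (negPf ab) /= !mul0r.
rewrite /opmul mulr_sumr sum_pair; apply: eq_bigr => c _.
rewrite (sum_single c) => [|b cb]; last first.
  by rewrite /psiplus /= eq_sym (negPf cb) andbF /= !mul0r.
rewrite /psiplus /= !eqxx /= mul1r; congr (_ * _).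
rewrite (sum_pair_fst a) => [|q qa]; last first.
  by rewrite /opadj /kron /opid /= eq_sym (negPf qa) mul0r conjC0 mulr0.
apply: eq_bigr => h _.
rewrite (sum_pair_fst c) => [|q qc]; last first.
  by rewrite /kron /opid /= eq_sym (negPf qc) !mul0r.
rewrite mulr_suml; apply: eq_bigr => f _.
by rewrite /opadj /kron /opid /= !eqxx rmorphM rmorph_nat !mul1r.
Qed.

Lemma fid_sum (U : Op R I) (K : Type) (ks : seq K) (F : K -> Op R (I * I)%type) X :
  (forall p q, X p q = \sum_(k <- ks) F k p q) -> fid U X = \sum_(k <- ks) fid U (F k).
Proof.
move=> XF; rewrite /fid -mulr_sumr; congr (_ * _).
transitivity (\sum_a \sum_c \sum_h \sum_f \sum_(k <- ks) U c f * F k (c, f) (a, h) * (U a h)^*).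
  apply: eq_bigr => a _; apply: eq_bigr => c _; apply: eq_bigr => h _; apply: eq_bigr => f _.
  by rewrite XF mulr_sumr mulr_suml.
under eq_bigr => a _ do under eq_bigr => c _ do under eq_bigr => h _ do rewrite exchange_big.
under eq_bigr => a _ do under eq_bigr => c _ do rewrite exchange_big.
under eq_bigr => a _ do rewrite exchange_big.
by rewrite exchange_big.
Qed.

Lemma fid_rank1 (U : Op R I) (g : (I * I)%type -> C) :
  fid U (fun p q => g p * (g q)^*) = d%:R^-1 * (amp U g * (amp U g)^*).
Proof.
rewrite /fid; congr (_ * _).
rewrite mulrC conj_amp mulr_suml; apply: eq_bigr => a _.
rewrite exchange_big mulr_suml; apply: eq_bigr => h _.
rewrite /amp mulr_sumr; apply: eq_bigr => c _.
by rewrite mulr_sumr; apply: eq_bigr => f _; ring.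
Qed.

(* Brings the system [A'_j] to the front, so that [reduce j] traces the middle factor. *)
Definition focus (j : 'I_2) : I * I * I -> I * I * I := if j == ord0 then id else @swap12 d.

Lemma reduceE j (X : Op R (I * I * I)%type) x y :
  reduce j X x y = \sum_e X (focus j (x.1, e, x.2)) (focus j (y.1, e, y.2)).
Proof. by rewrite /reduce /focus; case: (j == ord0). Qed.

Lemma FsuccE K (M : 'I_K -> Op R (I * I * I)%type) U rho ms rs j :
    (forall i a b, M i a b = \sum_(m <- ms i) m a * (m b)^*) ->
    (forall s t, rho s t = \sum_(r <- rs) r s * (r t)^*) ->
  Fsucc M U rho j = \sum_i \sum_(m <- ms i) \sum_(r <- rs) succ (U i j) (postvec m r \o focus j).
Proof.
move=> Mms rhors; rewrite /Fsucc; apply: eq_bigr => i _; rewrite optr_psiplus_conj.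
set h := fun m r => postvec m r \o focus j.
rewrite (@fid_sum (U i j) _ (index_enum I)
    (fun e p q => \sum_(m <- ms i) \sum_(r <- rs) slice (h m r) e p * (slice (h m r) e q)^*));
  last first.
  by move=> p q; rewrite reduceE; apply: eq_bigr => e _; apply: postM_rank1.
under eq_bigr => e _ do rewrite (@fid_sum (U i j) _ (ms i)
  (fun m p q => \sum_(r <- rs) slice (h m r) e p * (slice (h m r) e q)^*) _ (fun p q => erefl)).
under eq_bigr => e _ do under eq_bigr => m _ do rewrite (@fid_sum (U i j) _ rs
  (fun r p q => slice (h m r) e p * (slice (h m r) e q)^*) _ (fun p q => erefl)).
under eq_bigr => e _ do under eq_bigr => m _ do under eq_bigr => r _ do rewrite fid_rank1.
rewrite exchange_big; apply: eq_bigr => m _.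
rewrite exchange_big; apply: eq_bigr => r _.
by rewrite /succ mulr_sumr.
Qed.

Lemma sum_trace_postM K (M : 'I_K -> Op R (I * I * I)%type) rho :
    (0 < d)%N -> (forall x y, \sum_i M i x y = opid R x y) -> optr rho = 1 ->
  \sum_i \sum_x postM M rho i x x = 1.
Proof.
move=> d_gt0 povmM tr_rho; rewrite exchange_big.
transitivity (\sum_(x : I * I * I) (d%:R ^+ 2)^-1 * \sum_zt rho (zt, x.2) (zt, x.2)).
  apply: eq_bigr => x _; under eq_bigr => i _ do rewrite postM_entry.
  rewrite -mulr_sumr; congr (_ * _).
  rewrite exchange_big; apply: eq_bigr => zt _.
  rewrite exchange_big (sum_single zt) => [|wt wtz].
    by rewrite -mulr_suml povmM /opid eqxx mul1r.
  by rewrite -mulr_suml povmM /opid /= xpair_eqE eq_sym (negPf wtz) andbF mul0r.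
rewrite -mulr_sumr sum_triple.
have -> : \sum_(a : I) \sum_(b : I) \sum_(c : I) \sum_zt rho (zt, c) (zt, c) = d%:R ^+ 2.
  under eq_bigr => a _ do under eq_bigr => b _ do
    rewrite exchange_big -(sum_pair (fun p => rho p p)) -/(optr rho) tr_rho.
  by rewrite !sumr_const !card_ord expr2 mulr_natr.
by rewrite mulVf // expf_neq0 // pnatr_eq0 -lt0n.
Qed.

Lemma sum_dot_postvec K (M : 'I_K -> Op R (I * I * I)%type) rho ms rs :
    (forall i a b, M i a b = \sum_(m <- ms i) m a * (m b)^*) ->
    (forall s t, rho s t = \sum_(r <- rs) r s * (r t)^*) ->
    (0 < d)%N -> (forall x y, \sum_i M i x y = opid R x y) -> optr rho = 1 ->
  \sum_i \sum_(m <- ms i) \sum_(r <- rs) dot (postvec m r) (postvec m r) = 1.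
Proof.
move=> Mms rhors d_gt0 povmM tr_rho; rewrite -(sum_trace_postM d_gt0 povmM tr_rho).
apply: eq_bigr => i _; under [RHS]eq_bigr => x _ do rewrite (postM_rank1 (Mms i) rhors).
rewrite [RHS]exchange_big; apply: eq_bigr => m _; rewrite [RHS]exchange_big.
by apply: eq_bigr => r _; apply: eq_bigr => x _; rewrite mulrC.
Qed.

End Protocol.

Lemma qbound_inv_sqr (R : realType) (d : nat) (p : R) : (0 < d)%N ->
  qbound ((d%:R : R) ^+ 2)^-1 p
  = (1 + Num.sqrt (1 + 4%:R * (d%:R ^+ 2 - 1) * (p - 1) * p / d%:R ^+ 2)) / 2%:R.
Proof.
move=> d_gt0; rewrite /qbound; congr ((1 + Num.sqrt _) / _).
by field; rewrite pnatr_eq0 -lt0n.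
Qed.

Local Open Scope complex_scope.

Theorem mainTheorem4 (R : realType) (d : nat) (hd : (2 <= d)%N)
  (p : R) (hp0 : 0 <= p) (hp1 : p <= 1)
  (rho : Op R ('I_d * 'I_d)%type) (hrho : is_state rho)
  (K : nat) (M : 'I_K -> Op R ('I_d * 'I_d * 'I_d)%type) (hM : is_povm M)
  (U : 'I_K -> 'I_2 -> Op R 'I_d) (hU : forall i j, unitary (U i j)) :
  p%:C * Fsucc M U rho ord0 + (1 - p)%:C * Fsucc M U rho ord_max
  <= ((1 + Num.sqrt (1 + 4%:R * (d%:R ^+ 2 - 1) * (p - 1) * p / d%:R ^+ 2))
       / 2%:R)%:C.
Proof.
case: hrho => psd_rho tr_rho; case: hM => psd_M povmM.
have d_gt0 : (0 < d)%N by apply: ltnW.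
have [rs rhors] := psd_rank1_decomp psd_rho.
have [ms Mms] := fin_all_exists (fun i => psd_rank1_decomp (psd_M i)).
rewrite !(FsuccE _ _ Mms rhors) -qbound_inv_sqr // -[X in _ <= X]mulr1.
rewrite -(sum_dot_postvec Mms rhors d_gt0 povmM tr_rho) !mulr_sumr -big_split.
apply: ler_sum => i _; rewrite !mulr_sumr -big_split.
apply: ler_sum => m _; rewrite !mulr_sumr -big_split.
apply: ler_sum => r _; apply: succ_qbound => //; exact/andP.
Qed.
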